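(* Let $G=([n],E)$ be an undirected graph with pathwidth $s=\mathrm{pw}(G)\ge 1$. Then there exist a function $c:[n]\to[s]$ and a permutation $u\in\Pi([n])$ such that for every $i\in[n]$ at least one of the following holds: (1) for every neighbour $k$ of $i$ in $G$, $u(i)\le u(k)$; (2) for all $j,k\in[n]$ such that $c(j)=c(i)$, $u(i)<u(j)$ and $k$ is a neighbour of $j$ in $G$, we have $u(i)\le u(k)$.
   Context: $[n]=\{1,\dots,n\}$. $\Pi([n])$ is the set of permutations of $[n]$ written as words $(u_1,\dots,u_n)$ in which each element occurs once; $u(i)$ denotes the position of $i$ in $u$. A path decomposition of an undirected graph $G=(V,E)$ is a sequence $X_1,\dots,X_p$ of subsets of $V$ such that every vertex lies in some $X_a$, every edge has both endpoints in some common $X_a$, and if $v\in X_a\cap X_b$ with $a<b$ then $v\in X_c$ for all $c\in[a,b]$. Its size is $\max_a|X_a|-1$, and the pathwidth $\mathrm{pw}(G)$ is the minimum size of a path decomposition of $G$. *)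

From mathcomp Require Import all_boot all_fingroup.
Set Implicit Arguments. Unset Strict Implicit. Unset Printing Implicit Defensive.

Definition simple_graph (n : nat) (e : rel 'I_n) : Prop :=
  symmetric e /\ irreflexive e.

(* Xs = X_1,...,X_p (0-indexed here) is a path decomposition of the graph e. *)
Definition path_decomposition (n : nat) (e : rel 'I_n) (Xs : seq {set 'I_n}) : Prop :=
  (forall v : 'I_n, has (fun X : {set 'I_n} => v \in X) Xs) /\
  (forall v w : 'I_n, e v w -> has (fun X : {set 'I_n} => (v \in X) && (w \in X)) Xs) /\
  (forall (v : 'I_n) (a b c : nat), a <= c -> c <= b -> b < size Xs ->
     v \in nth set0 Xs a -> v \in nth set0 Xs b -> v \in nth set0 Xs c).

Definition pd_size (n : nat) (Xs : seq {set 'I_n}) : nat :=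
  (\max_(X <- Xs) #|X|).-1.

Definition pathwidth_is (n : nat) (e : rel 'I_n) (s : nat) : Prop :=
  (exists Xs, path_decomposition e Xs /\ pd_size Xs = s) /\
  (forall Xs, path_decomposition e Xs -> s <= pd_size Xs).

From mathcomp Require Import all_boot all_fingroup zify.
Set Implicit Arguments. Unset Strict Implicit. Unset Printing Implicit Defensive.

(* Order the vertices by the index of the last bag containing them.  If [i]
   has a neighbour placed before it, then the vertices [j] placed after [i]
   that also have a neighbour placed before [i] lie, together with [i] and
   with the latest such earlier neighbour, in a single bag; so each [i] is in
   conflict with fewer than [s] later vertices, and colouring greedily from
   the last position backwards uses at most [s] colours. *)

Section GreedyColouring.
Variables (T : finType) (s : nat) (conf : rel T) (u : T -> nat).
Hypotheses (s_gt0 : 0 < s) (u_inj : injective u).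
Hypothesis conf_lt : forall i j, conf i j -> u i < u j.
Hypothesis card_conf_lt : forall i, #|[set j | conf i j]| < s.

Definition proper_from (m : nat) (c : T -> 'I_s) : Prop :=
  forall i j, conf i j -> m <= u i -> c i != c j.

Lemma exists_colour_avoiding (c : T -> 'I_s) i :
  exists col, col \notin [set c j | j in [set j | conf i j]].
Proof.
set S := [set c j | j in _].
have ltS : #|S| < s by apply: leq_ltn_trans (leq_imset_card _ _) (card_conf_lt i).
case: (pickP [pred col | col \notin S]) => [col free | full]; first by exists col.
move: ltS; rewrite ltnNge -[s in s <= _]card_ord -cardsT.
by rewrite subset_leq_card //; apply/subsetP => col _; move/negbFE: (full col).
Qed.

Lemma proper_from_pred m c : proper_from m.+1 c -> exists c', proper_from m c'.
Proof.
move=> properc.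
case: (pickP (fun x => u x == m)) => [i0 /eqP ui0 | none]; last first.
  exists c => i j ij le_mi; apply: properc => //.
  by rewrite ltn_neqAle le_mi eq_sym (negbT (none i)).
have [col colP] := exists_colour_avoiding c i0.
exists (fun x => if x == i0 then col else c x) => i j ij le_mi.
have j_i0 : (j == i0) = false.
  by apply/eqP => ji0; move: (conf_lt ij); rewrite ji0 ui0; lia.
rewrite j_i0; have [ii0 | i_i0] := eqVneq i i0.
  by move: ij; rewrite ii0 => ij; apply: contraNneq colP => ->; rewrite imset_f ?inE.
apply: properc => //; rewrite ltn_neqAle le_mi andbT.
by apply: contra_neq i_i0 => umi; apply: u_inj; rewrite -umi ui0.
Qed.

Lemma greedy_colouring : exists c : T -> 'I_s, forall i j, conf i j -> c i != c j.
Proof.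
pose top := \max_i (u i).+1.
have from_top k m : top <= m + k -> exists c, proper_from m c.
  elim: k m => [|k IHk] m le_top.
    exists (fun=> Ordinal s_gt0) => i j _ le_mi.
    by exfalso; have := leq_bigmax (F := fun x => (u x).+1) i; rewrite -/top; lia.
  rewrite -addSnnS in le_top; have [c] := IHk _ le_top; exact: proper_from_pred.
have [c properc] := from_top top 0 (leqnn _).
by exists c => i j ij; apply: properc.
Qed.

End GreedyColouring.

Lemma rank_perm n (key : 'I_n -> nat) (key_inj : injective key) :
  exists u : {perm 'I_n}, forall a b, (u a < u b) = (key a < key b).
Proof.
pose rk v := #|[set w | key w < key v]|.
have rk_lt v : rk v < n.
  rewrite -[n]card_ord -cardsT; apply: proper_card; apply/properP.
  by split; [apply/subsetP | exists v; rewrite ?inE ?ltnn].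
have rk_mono a b : key a < key b -> rk a < rk b.
  move=> lt_ab; apply: proper_card; apply/properP; split.
    by apply/subsetP => x; rewrite !inE => /ltn_trans; apply.
  by exists a; rewrite !inE ?lt_ab ?ltnn.
have rk_inj : injective (fun v => Ordinal (rk_lt v)).
  move=> a b /(congr1 val) /= rk_ab.
  by case: (ltngtP (key a) (key b)) => [/rk_mono | /rk_mono | /key_inj //];
     rewrite rk_ab ltnn.
exists (perm rk_inj) => a b; rewrite !permE /=.
case: (ltngtP (key a) (key b)) => [/rk_mono // | /rk_mono lt_ba | /key_inj ->].
  by apply/negbTE; rewrite -leqNgt ltnW.
by rewrite ltnn.
Qed.

(* Ties are broken by the vertex itself, which makes the key injective. *)
Lemma sorting_perm n (key : 'I_n -> nat) :
  exists u : {perm 'I_n}, forall a b, key a < key b -> u a < u b.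
Proof.
have key'_inj : injective (fun v : 'I_n => key v * n + v).
  move=> a b /(congr1 (modn^~ n)) /=.
  by rewrite !modnMDl !modn_small // => /val_inj.
have [u uP] := rank_perm key'_inj.
by exists u => a b lt_ab; rewrite uP; have := ltn_ord a; nia.
Qed.

Section LastBag.
Variables (n : nat) (Xs : seq {set 'I_n}).

Definition last_bag (v : 'I_n) : nat :=
  \max_(a : 'I_(size Xs) | v \in nth set0 Xs a) val a.

Lemma mem_nth_bag_size v a : v \in nth set0 Xs a -> a < size Xs.
Proof. by case: ltnP => // le_size; rewrite nth_default ?inE. Qed.

Lemma leq_last_bag v a : v \in nth set0 Xs a -> a <= last_bag v.
Proof.
move=> va; have lt_a := mem_nth_bag_size va.
exact: (@leq_bigmax_cond _ (fun a : 'I_(size Xs) => v \in nth set0 Xs a)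
  (fun a => val a) (Ordinal lt_a)).
Qed.

Lemma mem_last_bag v :
  has (fun X : {set 'I_n} => v \in X) Xs -> v \in nth set0 Xs (last_bag v).
Proof.
move/(has_nthP set0) => [a lt_a va].
have : 0 < #|[pred a : 'I_(size Xs) | v \in nth set0 Xs a]|.
  by apply/card_gt0P; exists (Ordinal lt_a).
by move/(eq_bigmax_cond (fun a : 'I_(size Xs) => val a)) => [b vb eqb]; rewrite /last_bag eqb.
Qed.

Lemma card_bag_le X : X \in Xs -> #|X| <= (pd_size Xs).+1.
Proof.
move=> XXs; rewrite /pd_size; apply: leq_trans (leqSpred _).
exact: (@leq_bigmax_seq _ Xs (fun _ => true) (fun X : {set 'I_n} => #|X|) _ XXs erefl).
Qed.

End LastBag.

Section Decomposition.
Variables (n s : nat) (e : rel 'I_n) (Xs : seq {set 'I_n}).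
Hypothesis pdXs : path_decomposition e Xs.
Hypothesis card_bag : forall X, X \in Xs -> #|X| <= s.+1.
Variable u : {perm 'I_n}.
Hypothesis last_bag_mono : forall a b, u a <= u b -> last_bag Xs a <= last_bag Xs b.

Lemma mem_bag_edge v k R :
  e v k -> last_bag Xs k <= R <= last_bag Xs v -> v \in nth set0 Xs R.
Proof.
have [cover [edge convex]] := pdXs.
move=> vk /andP [le_kR le_Rv]; have vlast := mem_last_bag (cover v).
have /(has_nthP set0) [b _ /andP [vb kb]] := edge v k vk.
apply: (convex v b (last_bag Xs v)) => //; last exact: mem_nth_bag_size vlast.
exact: leq_trans (leq_last_bag kb) le_kR.
Qed.

(* All of [A], together with the latest vertex before [t] adjacent to [A],
   lies in the last bag of that vertex. *)
Lemma card_back_adjacent_le (A : {set 'I_n}) (t : nat) :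
  (forall v, v \in A -> t <= u v /\ exists2 k, e v k & u k < t) -> #|A| <= s.
Proof.
move=> AP; have [-> | [v0 v0A]] := set_0Vmem A; first by rewrite cards0.
have [k0 v0k0 ltk0] := (AP v0 v0A).2.
pose M := [pred k | (u k < t) && [exists v in A, e v k]].
have Mk0 : M k0 by rewrite /= ltk0; apply/existsP; exists v0; rewrite v0A.
have [ks /andP [ltks _] ksmax] := arg_maxnP (fun k => val (u k)) Mk0.
have ksA : ks \notin A by apply/negP => /AP [le_t _]; move: ltks; rewrite ltnNge le_t.
have AR : ks |: A \subset nth set0 Xs (last_bag Xs ks).
  apply/subsetP => x /setU1P [-> | xA].
    by apply: mem_last_bag; have [] := pdXs.
  have [le_tx [k xk ltk]] := AP x xA.
  apply: (mem_bag_edge xk); apply/andP; split; apply: last_bag_mono; [apply: ksmax | lia].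
  by rewrite /= ltk; apply/existsP; exists x; rewrite xA.
have := subset_leq_card AR; rewrite cardsU1 ksA add1n => /leq_trans le_bag.
rewrite -ltnS; apply: le_bag.
by apply/card_bag/mem_nth/mem_nth_bag_size/mem_last_bag; have [] := pdXs.
Qed.

Definition conflict (i j : 'I_n) : bool :=
  [&& u i < u j, [exists k, e i k && (u k < u i)] & [exists k, e j k && (u k < u i)]].

Lemma card_conflict_lt i : 0 < s -> #|[set j | conflict i j]| < s.
Proof.
move=> s_gt0; have [/existsP [k0 /andP [ik0 ltk0]] | no_back] :=
  boolP [exists k, e i k && (u k < u i)]; last first.
  by apply: leq_ltn_trans s_gt0; rewrite leqn0 cards_eq0; apply/eqP/setP => j;
     rewrite !inE /conflict (negbTE no_back) andbF.
set J := [set j | _].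
have iJ : i \notin J by rewrite inE /conflict ltnn.
have := card_back_adjacent_le (A := i |: J) (t := u i).
rewrite cardsU1 iJ add1n; apply=> v /setU1P [-> | vJ].
  by split; last by exists k0.
move: vJ; rewrite inE => /and3P [lt_iv _ /existsP [k /andP [vk ltk]]].
by split; [apply: ltnW | exists k].
Qed.

End Decomposition.

Theorem mainTheorem13 (n s : nat) (e : rel 'I_n) (hG : simple_graph e)
  (hs : 1 <= s) (hpw : pathwidth_is e s) :
  exists (c : 'I_n -> 'I_s) (u : {perm 'I_n}),
    forall i : 'I_n,
      (forall k : 'I_n, e i k -> u i <= u k) \/
      (forall j k : 'I_n, c j = c i -> u i < u j -> e j k -> u i <= u k).
Proof.
have [[Xs [pdXs size_Xs]] _] := hpw.
have card_bag X : X \in Xs -> #|X| <= s.+1 by rewrite -size_Xs; apply: card_bag_le.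
have [u u_sorted] := sorting_perm (last_bag Xs).
have u_le a b : u a <= u b -> last_bag Xs a <= last_bag Xs b.
  by move=> le_ab; rewrite leqNgt; apply: contraTN le_ab => /u_sorted; rewrite -ltnNge.
have u_inj : injective (fun a => val (u a)) by move=> a b /val_inj/perm_inj.
have conflict_lt i j : conflict e u i j -> u i < u j by case/andP.
have card_conflict := card_conflict_lt pdXs card_bag u_le ^~ hs.
have [c c_proper] := greedy_colouring hs u_inj conflict_lt card_conflict.
exists c, u => i.
have [/existsP [k0 /andP [ik0 ltk0]] | no_back] := boolP [exists k, e i k && (u k < u i)];
  last by left => k ik; rewrite leqNgt; apply: contra no_back => ltk;
          apply/existsP; exists k; rewrite ik.
right => j k cji lt_ij jk; rewrite leqNgt; apply/negP => ltk.
have /c_proper : conflict e u i j.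
  by rewrite /conflict lt_ij /=; apply/andP; split; apply/existsP;
     [exists k0; rewrite ik0 ltk0 | exists k; rewrite jk ltk].
by rewrite cji eqxx.
Qed.
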